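(* Let $E$ be a Banach lattice with an order continuous norm, let $A$ be an ideal in $E$, and let $\mathfrak{B}$ be the Boolean subalgebra of $\mathfrak{B}(E)$ generated by the order projections $\pi_x$, $x\in A$, where $\pi_x(z)=\sup\{z\wedge n|x|:n\in\mathbb{N}\}$. Suppose $T$ is $\mathfrak{B}$-Volterra, $0\le x_3\le x_2\le x_1$ in $A$, and $\{\pi_{x_1},\sigma,\rho\}$ is an antichain in $\mathfrak{B}$. Then $(\pi_{x_1}-\pi_{x_2})T\sigma x\perp(\pi_{x_2}-\pi_{x_3})T(\rho^*\sigma x+w)$ for every $x\in E$ and $w\in\pi_{x_1}^*(E)$. In particular, $(\pi_{x_1}-\pi_{x_2})T\sigma x\perp\pi_{x_2}T\rho^*\sigma x$ for every $x\in E$.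
   Context: $\mathfrak{B}(E)$ is the Boolean algebra of all order projections on $E$ ($\pi\le\rho$ iff $\pi\rho=\pi$, $\pi\wedge\rho=\pi\rho$, $\pi^*=I_E-\pi$, zero $\mathbf 0$, unit $\mathbf 1=I_E$). A positive operator $T$ is $\mathfrak{B}$-Volterra if for all $\pi\in\mathfrak{B}$ and $x,y\in E$, $\pi x=\pi y$ implies $\pi Tx=\pi Ty$. For $x\in E$, $\pi_x$ is the order projection onto the band generated by $x$, given on $z\in E^+$ by $\pi_x(z)=\sup\{z\wedge n|x|:n\in\mathbb{N}\}$. A nonempty subset of $\mathfrak{B}$ is an antichain if any two distinct elements have meet $\mathbf 0$. $u\perp v$ means $|u|\wedge|v|=0$. *)

From HB Require Import structures.
From mathcomp Require Import all_boot all_order all_algebra.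
From mathcomp Require Import all_classical all_reals all_analysis.
Set Implicit Arguments. Unset Strict Implicit. Unset Printing Implicit Defensive.
Import Order.TTheory GRing.Theory Num.Theory.
Local Open Scope ring_scope.

Record vector_lattice (R : realType) (E : lmodType R) := VectorLattice {
  vl_le : E -> E -> Prop;
  vl_sup : E -> E -> E;
  vl_inf : E -> E -> E;
  vl_refl : forall x, vl_le x x;
  vl_antisym : forall x y, vl_le x y -> vl_le y x -> x = y;
  vl_trans : forall x y z, vl_le x y -> vl_le y z -> vl_le x z;
  vl_add : forall x y z, vl_le x y -> vl_le (x + z) (y + z);
  vl_scale : forall (a : R) x y, 0 <= a -> vl_le x y -> vl_le (a *: x) (a *: y);
  vl_sup_l : forall x y, vl_le x (vl_sup x y);
  vl_sup_r : forall x y, vl_le y (vl_sup x y);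
  vl_sup_least : forall x y z, vl_le x z -> vl_le y z -> vl_le (vl_sup x y) z;
  vl_inf_l : forall x y, vl_le (vl_inf x y) x;
  vl_inf_r : forall x y, vl_le (vl_inf x y) y;
  vl_inf_greatest : forall x y z, vl_le z x -> vl_le z y -> vl_le z (vl_inf x y)
}.

Section VL.
Context {R : realType} {E : lmodType R} (L : vector_lattice E).

Definition vl_abs (x : E) : E := vl_sup L x (- x).

Definition vl_disjoint (u v : E) : Prop := vl_inf L (vl_abs u) (vl_abs v) = 0.

Definition vl_is_sup (S : set E) (s : E) : Prop :=
  (forall t, S t -> vl_le L t s) /\
  (forall u, (forall t, S t -> vl_le L t u) -> vl_le L s u).

Definition vl_is_inf (S : set E) (s : E) : Prop :=
  (forall t, S t -> vl_le L s t) /\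
  (forall u, (forall t, S t -> vl_le L u t) -> vl_le L u s).

Definition vl_ideal (A : set E) : Prop :=
  A 0 /\ (forall (a : R) x y, A x -> A y -> A (a *: x + y)) /\
  (forall x y, A x -> vl_le L (vl_abs y) (vl_abs x) -> A y).

Definition linear_op (P : E -> E) : Prop :=
  forall (a : R) x y, P (a *: x + y) = a *: P x + P y.

Definition positive_op (T : E -> E) : Prop :=
  linear_op T /\ (forall x, vl_le L 0 x -> vl_le L 0 (T x)).

(* Order projections: linear idempotent operators P with 0 <= P <= I
   (equivalently, band projections). *)
Definition order_projection (P : E -> E) : Prop :=
  linear_op P /\ (forall x, P (P x) = P x) /\
  (forall x, vl_le L 0 x -> vl_le L 0 (P x) /\ vl_le L (P x) x).

Definition proj_zero : E -> E := fun _ => 0.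
Definition proj_one : E -> E := fun x => x.
Definition proj_meet (P Q : E -> E) : E -> E := fun x => P (Q x).
Definition proj_compl (P : E -> E) : E -> E := fun x => x - P x.

Definition bool_subalgebra (S : set (E -> E)) : Prop :=
  (forall P, S P -> order_projection P) /\
  S proj_zero /\ S proj_one /\
  (forall P Q, S P -> S Q -> S (proj_meet P Q)) /\
  (forall P, S P -> S (proj_compl P)).

Definition generated_subalgebra (G : set (E -> E)) : set (E -> E) :=
  fun P => forall S, bool_subalgebra S -> (forall Q, G Q -> S Q) -> S P.

Definition volterra (B : set (E -> E)) (T : E -> E) : Prop :=
  forall pi, B pi -> forall x y, pi x = pi y -> pi (T x) = pi (T y).

Definition antichain (B : set (E -> E)) (C : set (E -> E)) : Prop :=
  (exists P, C P) /\ (forall P, C P -> B P) /\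
  (forall P Q, C P -> C Q -> P <> Q -> proj_meet P Q = proj_zero).

End VL.

Definition banach_lattice_norm {R : realType} {E : completeNormedModType R}
  (L : vector_lattice E) : Prop :=
  forall x y : E, vl_le L (vl_abs L x) (vl_abs L y) -> `|x| <= `|y|.

(* Order continuous norm: every downward directed set x_alpha of positive
   elements with infimum 0 satisfies ||x_alpha|| -> 0 (i.e. inf of norms = 0,
   the norm being monotone on positives). *)
Definition order_continuous_norm {R : realType} {E : completeNormedModType R}
  (L : vector_lattice E) : Prop :=
  forall S : set E, (exists s, S s) ->
    (forall s, S s -> vl_le L 0 s) ->
    (forall a b, S a -> S b -> exists c, S c /\ vl_le L c a /\ vl_le L c b) ->
    vl_is_inf L S 0 ->
    forall eps : R, 0 < eps -> exists s, S s /\ `|s| < eps.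

Definition is_band_proj_of {R : realType} {E : lmodType R}
  (L : vector_lattice E) (x : E) (P : E -> E) : Prop :=
  order_projection L P /\
  forall z, vl_le L 0 z ->
    vl_is_sup L [set vl_inf L z (n%:R *: vl_abs L x) | n in [set: nat]] (P z).

(** Only the band projections matter. From [0 <= x3 <= x2 <= x1] we get
    [pi_x3 <= pi_x2 <= pi_x1], so [pi_x1 - pi_x2] and [pi_x2 - pi_x3] are order
    projections whose product is 0 (and likewise [pi_x1 - pi_x2] and [pi_x2]).
    Order projections with product 0 have disjoint ranges: if [m] lies below
    both [|P y|] and [|Q y'|], then [P m = m = Q m], so [m = P (Q m) = 0]. *)
From mathcomp Require Import all_boot all_order all_algebra.
From mathcomp Require Import all_classical all_reals all_analysis.
Import GRing.Theory Num.Theory.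
Local Open Scope ring_scope.

Section VectorLattice.
Context {R : realType} {E : lmodType R} {L : vector_lattice E}.
Local Notation le := (vl_le L).
Local Notation abs := (vl_abs L).

Section LinearOp.
Context {P : E -> E} (linP : linear_op P).

Lemma linear_op0 : P 0 = 0.
Proof.
by apply: (addrI (P 0)); rewrite -{1}(scale1r (P 0)) -linP scale1r !addr0.
Qed.

Lemma linear_opD x y : P (x + y) = P x + P y.
Proof. by rewrite -{1}(scale1r x) linP scale1r. Qed.

Lemma linear_opN x : P (- x) = - P x.
Proof. by rewrite -(addr0 (- x)) -scaleN1r linP linear_op0 addr0 scaleN1r. Qed.

Lemma linear_opB x y : P (x - y) = P x - P y.
Proof. by rewrite linear_opD linear_opN. Qed.

End LinearOp.

Lemma linear_op_comp (P Q : E -> E) :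
  linear_op P -> linear_op Q -> linear_op (P \o Q).
Proof. by move=> linP linQ a x y /=; rewrite linQ linP. Qed.

Lemma vl_lerD2l {x y} z : le x y -> le (z + x) (z + y).
Proof. by rewrite ![z + _]addrC; apply: vl_add. Qed.

Lemma vl_subr_ge0 x y : le 0 (y - x) <-> le x y.
Proof.
split=> [h | h]; first by have := vl_add x h; rewrite add0r subrK.
by have := vl_add (- x) h; rewrite subrr.
Qed.

Lemma vl_oppr_le0 {x} : le 0 x -> le (- x) 0.
Proof. by move=> h; have := vl_add (- x) h; rewrite add0r subrr. Qed.

Lemma vl_decomp z : exists u v, [/\ le 0 u, le 0 v & z = u - v].
Proof.
exists (vl_sup L z 0), (vl_sup L z 0 - z); split; first exact: vl_sup_r.
  exact/vl_subr_ge0/vl_sup_l.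
by rewrite opprB addrC subrK.
Qed.

(* [|a| + |a| >= a + (- a) = 0], then halve. *)
Lemma vl_abs_ge0 a : le 0 (abs a).
Proof.
have ge0_2abs : le 0 (abs a + abs a).
  apply: (@vl_trans _ _ L _ (abs a - a)).
    by rewrite -(subrr a); apply/vl_add/vl_sup_l.
  exact/vl_lerD2l/vl_sup_r.
have half_ge0 : 0 <= 2%:R^-1 :> R by rewrite invr_ge0 ler0n.
have := vl_scale half_ge0 ge0_2abs.
by rewrite scaler0 scalerDr -scalerDl -div1r -splitr scale1r.
Qed.

Lemma vl_abs_le {x y} : le 0 x -> le x y -> le (abs x) (abs y).
Proof.
move=> x_ge0 le_xy; have le_x_absy := vl_trans le_xy (vl_sup_l L y (- y)).
apply: vl_sup_least; first exact: le_x_absy.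
exact: vl_trans (vl_oppr_le0 x_ge0) (vl_trans x_ge0 le_x_absy).
Qed.

Lemma positive_op_le {P : E -> E} :
  linear_op P -> (forall x, le 0 x -> le 0 (P x)) ->
  forall x y, le x y -> le (P x) (P y).
Proof.
move=> linP P_ge0 x y /vl_subr_ge0/P_ge0.
by rewrite linear_opB // => /vl_subr_ge0.
Qed.

Lemma linear_op_eq_ge0 (P Q : E -> E) : linear_op P -> linear_op Q ->
  (forall u, le 0 u -> P u = Q u) -> P =1 Q.
Proof.
move=> linP linQ eqPQ z; have [u [v [u_ge0 v_ge0 ->]]] := vl_decomp z.
by rewrite !linear_opB // !eqPQ.
Qed.

Section OrderProjection.
Context {P : E -> E} (projP : order_projection L P).

Lemma order_projection_ge0 [x] : le 0 x -> le 0 (P x).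
Proof. by case: projP => _ [_ hP] /hP []. Qed.

Lemma order_projection_le [x] : le 0 x -> le (P x) x.
Proof. by case: projP => _ [_ hP] /hP []. Qed.

Lemma order_projection_fix [v w] : le 0 w -> le w (P v) -> P w = w.
Proof.
have [linP [idP _]] := projP; move=> w_ge0 le_w_Pv.
apply: vl_antisym; first exact: order_projection_le.
have /order_projection_le : le 0 (P v - w) by apply/vl_subr_ge0.
by rewrite linear_opB // idP -vl_subr_ge0 opprB addrC addrA subrK vl_subr_ge0.
Qed.

Lemma order_projection_abs t : le (abs (P t)) (P (abs t)).
Proof.
have [linP _] := projP; have P_le := positive_op_le linP order_projection_ge0.
apply: vl_sup_least; first exact/P_le/vl_sup_l.
by rewrite -linear_opN //; apply/P_le/vl_sup_r.
Qed.

End OrderProjection.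

Lemma order_projection_disjoint {P Q : E -> E} :
  order_projection L P -> order_projection L Q -> (forall z, P (Q z) = 0) ->
  forall y y', vl_disjoint L (P y) (Q y').
Proof.
move=> projP projQ PQ0 y y'; rewrite /vl_disjoint; set m := vl_inf L _ _.
have m_ge0 : le 0 m by apply: vl_inf_greatest; exact: vl_abs_ge0.
have Pm : P m = m.
  apply: (order_projection_fix projP m_ge0).
  exact: vl_trans (vl_inf_l _ _ _) (order_projection_abs projP y).
have Qm : Q m = m.
  apply: (order_projection_fix projQ m_ge0).
  exact: vl_trans (vl_inf_r _ _ _) (order_projection_abs projQ y').
by rewrite -Pm -Qm PQ0.
Qed.

Definition proj_le (Q P : E -> E) := forall z, le 0 z -> le (Q z) (P z).

Section OrderProjectionLe.
Context {P Q : E -> E}.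
Context (projP : order_projection L P) (projQ : order_projection L Q).
Hypothesis le_QP : proj_le Q P.

Lemma order_projection_le_idl x : P (Q x) = Q x.
Proof.
have [linP _] := projP; have [linQ _] := projQ.
move: x; apply: (linear_op_eq_ge0 (P \o Q) Q) => // [|u u_ge0].
  exact: linear_op_comp.
apply: (@order_projection_fix _ projP u); last exact: le_QP.
exact: (order_projection_ge0 projQ).
Qed.

(* [Q] kills [u - P u >= 0] since [0 <= Q (u - P u) <= P (u - P u) = 0]. *)
Lemma order_projection_le_idr x : Q (P x) = Q x.
Proof.
have [linP [idP _]] := projP; have [linQ _] := projQ.
move: x; apply: (linear_op_eq_ge0 (Q \o P) Q) => // [|u u_ge0].
  exact: linear_op_comp.
have PuB_ge0 : le 0 (u - P u) by apply/vl_subr_ge0/(order_projection_le projP).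
have := le_QP _ PuB_ge0; rewrite [P (_ - _)]linear_opB // idP subrr => QuB_le0.
have /= := vl_antisym QuB_le0 (order_projection_ge0 projQ PuB_ge0).
by rewrite linear_opB // => /eqP; rewrite subr_eq0 => /eqP.
Qed.

Lemma order_projection_sub : order_projection L (fun y => P y - Q y).
Proof.
have [linP [idP _]] := projP; have [linQ [idQ _]] := projQ.
split; [|split].
- by move=> a x y; rewrite linP linQ scalerBr opprD addrACA.
- move=> x; rewrite linear_opB // linear_opB // idP idQ.
  by rewrite order_projection_le_idl order_projection_le_idr subrr subr0.
- move=> z z_ge0; split; first exact/vl_subr_ge0/le_QP.
  apply: (@vl_trans _ _ L _ (z - Q z)).
    exact/vl_add/(order_projection_le projP).
  have := vl_lerD2l z (vl_oppr_le0 (order_projection_ge0 projQ z_ge0)).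
  by rewrite addr0.
Qed.

Lemma order_projection_sub_disjoint y y' : vl_disjoint L (P y - Q y) (Q y').
Proof.
have [_ [idQ _]] := projQ.
apply: (order_projection_disjoint order_projection_sub projQ) => z.
by rewrite order_projection_le_idl idQ subrr.
Qed.

End OrderProjectionLe.

Lemma order_projection_sub_disjoint_sub {P Q Q' : E -> E} :
  order_projection L P -> order_projection L Q -> order_projection L Q' ->
  proj_le Q P -> proj_le Q' Q ->
  forall y y', vl_disjoint L (P y - Q y) (Q y' - Q' y').
Proof.
move=> projP projQ projQ' le_QP le_Q'Q.
have le_Q'P : proj_le Q' P.
  by move=> z z_ge0; apply: vl_trans (le_Q'Q z z_ge0) (le_QP z z_ge0).
have [linP _] := projP; have [linQ [idQ _]] := projQ.
have projPQ := order_projection_sub projP projQ le_QP.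
have projQQ' := order_projection_sub projQ projQ' le_Q'Q.
apply: (order_projection_disjoint projPQ projQQ') => z.
rewrite (linear_opB linP) (linear_opB linQ) idQ.
rewrite (order_projection_le_idl projP projQ le_QP).
rewrite (order_projection_le_idl projP projQ' le_Q'P).
by rewrite (order_projection_le_idl projQ projQ' le_Q'Q) !subrr.
Qed.

Lemma band_proj_le {x y} {P Q : E -> E} : le 0 x -> le x y ->
  is_band_proj_of L x Q -> is_band_proj_of L y P -> proj_le Q P.
Proof.
move=> x_ge0 le_xy [_ supQ] [_ supP] z z_ge0.
apply: (supQ z z_ge0).2 => _ [n _ <-].
apply: (@vl_trans _ _ L _ (vl_inf L z (n%:R *: abs y))); last first.
  by apply: (supP z z_ge0).1; exists n.
apply: vl_inf_greatest; first exact: vl_inf_l.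
apply: vl_trans (vl_inf_r _ _ _) _.
by apply: vl_scale; [rewrite ler0n | exact: vl_abs_le].
Qed.

End VectorLattice.

Theorem proposition3p12 (R : realType) (E : completeNormedModType R)
  (L : vector_lattice E)
  (HBL : banach_lattice_norm L) (HOC : order_continuous_norm L)
  (A : set E) (HA : vl_ideal L A)
  (pi : E -> E -> E) (Hpi : forall x, A x -> is_band_proj_of L x (pi x))
  (T : E -> E) (HT : positive_op L T)
  (HV : volterra (generated_subalgebra L [set pi x | x in A]) T)
  (x1 x2 x3 : E) (Hx1 : A x1) (Hx2 : A x2) (Hx3 : A x3)
  (H03 : vl_le L 0 x3) (H32 : vl_le L x3 x2) (H21 : vl_le L x2 x1)
  (sigma rho : E -> E)
  (Hanti : antichain (generated_subalgebra L [set pi x | x in A])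
             [set pi x1; sigma; rho]) :
  (forall x w : E, (exists z, w = proj_compl (pi x1) z) ->
     vl_disjoint L (pi x1 (T (sigma x)) - pi x2 (T (sigma x)))
       (pi x2 (T (proj_compl rho (sigma x) + w))
        - pi x3 (T (proj_compl rho (sigma x) + w)))) /\
  (forall x : E,
     vl_disjoint L (pi x1 (T (sigma x)) - pi x2 (T (sigma x)))
       (pi x2 (T (proj_compl rho (sigma x))))).
Proof.
have [proj1 _] := Hpi _ Hx1; have [proj2 _] := Hpi _ Hx2.
have [proj3 _] := Hpi _ Hx3.
have le21 := band_proj_le (vl_trans H03 H32) H21 (Hpi _ Hx2) (Hpi _ Hx1).
have le32 := band_proj_le H03 H32 (Hpi _ Hx3) (Hpi _ Hx2).
split=> [x w _ | x].
  exact: order_projection_sub_disjoint_sub proj1 proj2 proj3 le21 le32 _ _.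
exact: order_projection_sub_disjoint proj1 proj2 le21 _ _.
Qed.
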